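(* Let $T>0$ and let $\Sigma=(\mathcal X,\mathcal Y,M_U,M_D,\phi,\pi,H)$ be a $T$-periodic control system with outputs. If $\Sigma$ satisfies the IOS property from the input $u\in M_U$, then $\Sigma$ satisfies the UIOS property from the input $u\in M_U$.
   Context: Notation: $\mathbb R^+=[0,\infty)$. $K^+$: positive continuous functions on $\mathbb R^+$. $\mathcal N$: continuous non-decreasing $\rho:\mathbb R^+\to\mathbb R^+$ with $\rho(0)=0$. $K$: positive definite, increasing, continuous functions $\mathbb R^+\to\mathbb R^+$. $KL$: continuous $\sigma:\mathbb R^+\times\mathbb R^+\to\mathbb R^+$ with $\sigma(\cdot,t)\in K$ for each $t$ and $\sigma(s,\cdot)$ non-increasing tending to $0$. For a subset $U$ of a normed linear space $\mathcal U$ with $0\in U$, $\mathcal M(U)$ is the set of locally bounded $u:\mathbb R^+\to U$, $u_0$ the zero input, $B_U[0,r]=\{v\in U:\|v\|_{\mathcal U}\le r\}$. Control system with outputs $\Sigma=(\mathcal X,\mathcal Y,M_U,M_D,\phi,\pi,H)$: a set $U\subseteq\mathcal U$ ($0\in U$) and $M_U\subseteq\mathcal M(U)$ containing $u_0$; a set $D$ and $M_D\subseteq\mathcal M(D)$; normed linear spaces $\mathcal X,\mathcal Y$; a continuous $H:\mathbb R^+\times\mathcal X\times U\to\mathcal Y$ mapping bounded sets into bounded sets; a set-valued map $(t_0,x_0,u,d)\mapsto\pi(t_0,x_0,u,d)\subseteq[t_0,\infty)$ with $t_0\in\pi(t_0,x_0,u,d)$; a map $\phi:A_\phi\to\mathcal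 X$, $A_\phi\subseteq\mathbb R^+\times\mathbb R^+\times\mathcal X\times M_U\times M_D$, with: (1) for each $(t_0,x_0,u,d)$ some $t>t_0$ has $[t_0,t]\times\{(t_0,x_0,u,d)\}\subseteq A_\phi$; (2) $\phi(t_0,t_0,x_0,u,d)=x_0$; (3) causality: if $(t,t_0,x_0,u,d)\in A_\phi$, $t>t_0$, and $(\tilde u,\tilde d)$ agrees with $(u,d)$ on $[t_0,t]$, then $(t,t_0,x_0,\tilde u,\tilde d)\in A_\phi$ with the same value of $\phi$; (4) weak semigroup property: there is $r>0$ such that for each $t\ge t_0$ with $(t,t_0,x_0,u,d)\in A_\phi$: (a) $(\tau,t_0,x_0,u,d)\in A_\phi$ for $\tau\in[t_0,t]$; (b) $\phi(t,\tau,\phi(\tau,t_0,x_0,u,d),u,d)=\phi(t,t_0,x_0,u,d)$ for $\tau\in[t_0,t]\cap\pi(t_0,x_0,u,d)$; (c) if $(t+r,t_0,x_0,u,d)\in A_\phi$ then $\pi(t_0,x_0,u,d)\cap[t,t+r]\ne\emptyset$; (d) for $\tau\in\pi(t_0,x_0,u,d)$ with $(\tau,t_0,x_0,u,d)\in A_\phi$, $\pi(\tau,\phi(\tau,t_0,x_0,u,d),u,d)=\pi(t_0,x_0,u,d)\cap[\tau,\infty)$. $T$-periodic: (a) $H(t+T,x,u)=H(t,x,u)$ for all $(t,x,u)$; (b) for every $(u,d)\in M_U\times M_D$ and integer $k$ there are $P_{kT}u\in M_U$, $P_{kT}d\in M_D$ with $(P_{kT}u)(t)=u(t+kT)$, $(P_{kT}d)(t)=d(t+kT)$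 for all $t+kT\ge0$; (c) for each $(t,t_0,x_0,u,d)\in A_\phi$ with $t\ge t_0$ and each integer $k$ with $t_0-kT\ge0$: $(t-kT,t_0-kT,x_0,P_{kT}u,P_{kT}d)\in A_\phi$, $\pi(t_0-kT,x_0,P_{kT}u,P_{kT}d)=\{\tau-kT:\tau\in\pi(t_0,x_0,u,d)\}$ and $\phi(t,t_0,x_0,u,d)=\phi(t-kT,t_0-kT,x_0,P_{kT}u,P_{kT}d)$. BIC property: for each $(t_0,x_0,u,d)$ there is $t_{\max}\in(t_0,+\infty]$ with $A_\phi=\bigcup[t_0,t_{\max})\times\{(t_0,x_0,u,d)\}$, and if $t_{\max}<\infty$ then $\phi(\cdot,t_0,x_0,u,d)$ is unbounded on $[t_0,t_{\max})$. RFC from the input $u$: BIC and for all $r,T'\ge0$, $\sup\{\|\phi(t_0+s,t_0,x_0,u,d)\|_{\mathcal X}: u\in\mathcal M(B_U[0,r])\cap M_U, s\in[0,T'],\|x_0\|_{\mathcal X}\le r,t_0\in[0,T'],d\in M_D\}<\infty$. Robust equilibrium point from the input $u$: $H(t,0,0)=0$; $\phi(t,t_0,0,u_0,d)=0$ for all $t\ge t_0$, $d$; and for all $\varepsilon>0$, $T',h\ge0$ there is $\eta>0$ such that $\|x\|+\sup_t\|u(t)\|<\eta$, $t_0\in[0,T']$, $\tau\in[t_0,t_0+h]$, $d\in M_D$ imply $(\tau,t_0,x,u,d)\in A_\phi$ and $\|\phi(\tau,t_0,x,u,d)\|<\varepsilon$. IOS from the input $u\in M_U$: $\Sigma$ has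 BIC, is RFC from $u$, $0$ is a robust equilibrium point from $u$, and there exist $\sigma\in KL$, $\beta\in K^+$, $\gamma\in\mathcal N$ with $\|H(t,\phi(t,t_0,x_0,u,d),u(t))\|_{\mathcal Y}\le\sigma(\beta(t_0)\|x_0\|_{\mathcal X},t-t_0)+\sup_{t_0\le\tau\le t}\gamma(\|u(\tau)\|_{\mathcal U})$ for all $u\in M_U$, $(t_0,x_0,d)$, $t\ge t_0$. UIOS: the same with $\beta\equiv1$. *)

(* Time R^+ is modelled by the real
   numbers t with 0 <= t; input/disturbance signals are functions R -> _
   whose values at negative times are irrelevant. *)
From HB Require Import structures.
From mathcomp Require Import all_boot all_order all_algebra.
From mathcomp Require Import all_classical all_reals all_analysis.
Set Implicit Arguments. Unset Strict Implicit. Unset Printing Implicit Defensive.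
Import Order.TTheory GRing.Theory Num.Theory.
Import numFieldNormedType.Exports.
Local Open Scope classical_set_scope.
Local Open Scope ring_scope.

Section ControlSystems.
Variables (R : realType) (UU XX YY : normedModType R) (D : Type).

(* The data of a control system with outputs
   Sigma = (X, Y, M_U, M_D, phi, pi, H), with input set U subset of UU.
   [A t t0 x0 u d] means (t,t0,x0,u,d) \in A_phi; [phi] is meaningful on A. *)
Record ctrl_data := CtrlData {
  cs_U : set UU;
  cs_MU : set (R -> UU);
  cs_MD : set (R -> D);
  cs_A : R -> R -> XX -> (R -> UU) -> (R -> D) -> Prop;
  cs_phi : R -> R -> XX -> (R -> UU) -> (R -> D) -> XX;
  cs_pi : R -> XX -> (R -> UU) -> (R -> D) -> set R;
  cs_H : R -> XX -> UU -> YY }.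

Definition locally_bounded {V : normedModType R} (u : R -> V) :=
  forall r : R, exists M : R, forall t : R, 0 <= t <= r -> `|u t| <= M.

Definition MM (U : set UU) : set (R -> UU) :=
  [set u | (forall t : R, 0 <= t -> U (u t)) /\ locally_bounded u].

Definition zero_input : R -> UU := fun _ => 0.

Definition is_control_system (S : ctrl_data) : Prop :=
  let U := cs_U S in let MU := cs_MU S in let MD := cs_MD S in
  let A := cs_A S in let phi := cs_phi S in let pi := cs_pi S in
  let H := cs_H S in
  [/\ [/\ U 0, MU `<=` MM U & MU zero_input],
      {within [set p : R * XX * UU | 0 <= p.1.1 /\ U p.2],
         continuous (fun p : R * XX * UU => H p.1.1 p.1.2 p.2)},
      (forall r : R, exists M : R, forall (t : R) (x : XX) (v : UU),
          0 <= t <= r -> `|x| <= r -> U v -> `|v| <= r -> `|H t x v| <= M),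
      [/\
      (forall t t0 x0 u d, A t t0 x0 u d ->
          [/\ 0 <= t, 0 <= t0, MU u & MD d]) &
      (forall t0 x0 u d, 0 <= t0 -> MU u -> MD d ->
          pi t0 x0 u d t0 /\ pi t0 x0 u d `<=` [set t | t0 <= t])] &
      [/\
      (forall t0 x0 u d, 0 <= t0 -> MU u -> MD d ->
          exists t, t0 < t /\ forall s, t0 <= s <= t -> A s t0 x0 u d),
      (forall t0 x0 u d, 0 <= t0 -> MU u -> MD d -> phi t0 t0 x0 u d = x0),
      (forall t t0 x0 u d u' d', A t t0 x0 u d -> t0 < t -> MU u' -> MD d' ->
          (forall s, t0 <= s <= t -> u' s = u s /\ d' s = d s) ->
          A t t0 x0 u' d' /\ phi t t0 x0 u' d' = phi t t0 x0 u d) &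
      (exists2 r : R, 0 < r & forall t0 x0 u d t, t0 <= t -> A t t0 x0 u d ->
        [/\ (forall tau, t0 <= tau <= t -> A tau t0 x0 u d),
            (forall tau, t0 <= tau <= t -> pi t0 x0 u d tau ->
               phi t tau (phi tau t0 x0 u d) u d = phi t t0 x0 u d),
            (A (t + r) t0 x0 u d ->
               exists2 tau, pi t0 x0 u d tau & t <= tau <= t + r) &
            (forall tau, pi t0 x0 u d tau -> A tau t0 x0 u d ->
               pi tau (phi tau t0 x0 u d) u d =
               pi t0 x0 u d `&` [set s | tau <= s])])]].

(* T-periodicity; P k u stands for P_{kT} u *)
Definition T_periodic (T : R) (S : ctrl_data) : Prop :=
  let MU := cs_MU S in let MD := cs_MD S in
  let A := cs_A S in let phi := cs_phi S in let pi := cs_pi S in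
  let H := cs_H S in
  [/\ (forall t x v, 0 <= t -> cs_U S v -> H (t + T) x v = H t x v) &
  exists (PU : int -> (R -> UU) -> (R -> UU)) (PD : int -> (R -> D) -> (R -> D)),
  (forall u d (k : int), MU u -> MD d ->
     [/\ MU (PU k u), MD (PD k d) &
        forall t : R, 0 <= t -> 0 <= t + k%:~R * T ->
          PU k u t = u (t + k%:~R * T) /\ PD k d t = d (t + k%:~R * T)]) /\
  (forall t t0 x0 u d (k : int), A t t0 x0 u d -> t0 <= t ->
     0 <= t0 - k%:~R * T ->
     [/\ A (t - k%:~R * T) (t0 - k%:~R * T) x0 (PU k u) (PD k d),
         pi (t0 - k%:~R * T) x0 (PU k u) (PD k d) =
           [set tau - k%:~R * T | tau in pi t0 x0 u d] &
         phi t t0 x0 u d = phi (t - k%:~R * T) (t0 - k%:~R * T) x0 (PU k u) (PD k d)])].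

Definition BIC (S : ctrl_data) : Prop :=
  forall t0 x0 u d, 0 <= t0 -> cs_MU S u -> cs_MD S d ->
  exists tmax : \bar R,
    [/\ (t0%:E < tmax)%E,
        (forall t, cs_A S t t0 x0 u d <-> t0 <= t /\ (t%:E < tmax)%E) &
        ((tmax < +oo)%E -> forall M : R, exists t : R,
            [/\ t0 <= t, (t%:E < tmax)%E & M < `|cs_phi S t t0 x0 u d|])].

Definition RFC (S : ctrl_data) : Prop :=
  BIC S /\
  forall r T' : R, 0 <= r -> 0 <= T' -> exists M : R,
    forall u x0 s t0 d, cs_MU S u -> (forall t, 0 <= t -> `|u t| <= r) ->
      0 <= s <= T' -> `|x0| <= r -> 0 <= t0 <= T' -> cs_MD S d ->
      cs_A S (t0 + s) t0 x0 u d -> `|cs_phi S (t0 + s) t0 x0 u d| <= M.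

Definition sup_norm (u : R -> UU) : \bar R :=
  ereal_sup [set (`|u t|)%:E | t in [set t : R | 0 <= t]].

Definition robust_eq (S : ctrl_data) : Prop :=
  [/\ (forall t : R, 0 <= t -> cs_H S t 0 0 = 0),
      (forall t0 t d, 0 <= t0 -> t0 <= t -> cs_MD S d ->
         cs_A S t t0 0 zero_input d /\ cs_phi S t t0 0 zero_input d = 0) &
      (forall eps T' h : R, 0 < eps -> 0 <= T' -> 0 <= h ->
         exists2 eta : R, 0 < eta & forall x u t0 tau d,
           cs_MU S u -> ((`|x|)%:E + sup_norm u < eta%:E)%E ->
           0 <= t0 <= T' -> t0 <= tau <= t0 + h -> cs_MD S d ->
           cs_A S tau t0 x u d /\ `|cs_phi S tau t0 x u d| < eps)].

End ControlSystems.

Section Comparison.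
Variable R : realType.
Local Notation Rp := [set t : R | 0 <= t].

Definition classKp (b : R -> R) : Prop :=
  (forall t, 0 <= t -> 0 < b t) /\ {within Rp, continuous b}.

Definition classN (g : R -> R) : Prop :=
  [/\ {within Rp, continuous g},
      (forall s t, 0 <= s -> s <= t -> g s <= g t),
      (forall s, 0 <= s -> 0 <= g s) & g 0 = 0].

Definition classK (a : R -> R) : Prop :=
  [/\ {within Rp, continuous a}, a 0 = 0,
      (forall s, 0 < s -> 0 < a s) &
      (forall s t, 0 <= s -> s < t -> a s < a t)].

Definition classKL (sg : R -> R -> R) : Prop :=
  [/\ {within [set p : R * R | 0 <= p.1 /\ 0 <= p.2],
         continuous (fun p : R * R => sg p.1 p.2)},
      (forall s t, 0 <= s -> 0 <= t -> 0 <= sg s t),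
      (forall t, 0 <= t -> classK (fun s => sg s t)),
      (forall s t1 t2, 0 <= s -> 0 <= t1 -> t1 <= t2 -> sg s t2 <= sg s t1) &
      (forall s, 0 <= s -> sg s t @[t --> +oo] --> 0)].
End Comparison.

Section IOS.
Variables (R : realType) (UU XX YY : normedModType R) (D : Type).

(* the gain estimate, with a coefficient function b (b = beta for IOS,
   b = 1 for UIOS) *)
Definition IOS_estimate (S : @ctrl_data R UU XX YY D)
    (sg : R -> R -> R) (b : R -> R) (g : R -> R) : Prop :=
  forall u t0 x0 d t, cs_MU S u -> 0 <= t0 -> cs_MD S d -> t0 <= t ->
    cs_A S t t0 x0 u d ->
    ((`|cs_H S t (cs_phi S t t0 x0 u d) (u t)|)%:E <=
      (sg (b t0 * `|x0|) (t - t0))%:E +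
      ereal_sup [set (g `|u tau|)%:E | tau in [set tau : R | (t0 <= tau <= t)%R]])%E.

Definition IOS (S : @ctrl_data R UU XX YY D) : Prop :=
  [/\ BIC S, RFC S, robust_eq S &
      exists sg b g, [/\ classKL sg, classKp b, classN g & IOS_estimate S sg b g]].

Definition UIOS (S : @ctrl_data R UU XX YY D) : Prop :=
  [/\ BIC S, RFC S, robust_eq S &
      exists sg g, [/\ classKL sg, classN g & IOS_estimate S sg (fun _ => 1) g]].
End IOS.

(** The coefficient [beta t0] only matters through [t0] modulo [T]: by
   periodicity, a trajectory starting at [t0] is a shifted copy of one
   starting at [t0 - k T] in [[0, T]], so its output obeys the IOS bound with
   [beta (t0 - k T) <= B := max_[0, T] beta].  Hence [sigma (B s, t)] is a
   [KL] function giving the uniform estimate. *)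
From HB Require Import structures.
From mathcomp Require Import all_boot all_order all_algebra.
From mathcomp Require Import all_classical all_reals all_analysis.
From mathcomp Require Import lra.
Import Order.TTheory GRing.Theory Num.Theory.
Import numFieldNormedType.Exports.
Local Open Scope classical_set_scope.
Local Open Scope ring_scope.

Lemma continuous_within_comp {T1 T2 T3 : topologicalType} {A : set T1}
    {B : set T2} {g : T1 -> T2} {f : T2 -> T3} :
  continuous g -> g @` A `<=` B -> {within B, continuous f} ->
  {within A, continuous (f \o g)}.
Proof.
move=> cg gAB cf; apply/continuousP => O oO.
have /open_subspaceP [V oV VB] := (continuousP _).1 cf O oO.
apply/open_subspaceP; exists (g @^-1` V); first exact: ((continuousP _).1 cg).
have BA x : A x -> B (g x) by move=> Ax; apply: gAB; exists x.
rewrite eqEsubset; split => x [xV Ax]; split => //.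
- have : (V `&` B) (g x) by split; last exact: BA.
  by rewrite VB => -[].
- have : ((f @^-1` O) `&` B) (g x) by split; last exact: BA.
  by rewrite -VB => -[].
Qed.

Section ScaleComparison.
Variables (R : realType) (B : R).
Hypothesis B_gt0 : 0 < B.

Let scale_ge0 s : 0 <= s -> 0 <= B * s.
Proof. exact/mulr_ge0/ltW. Qed.

Lemma classK_scale (a : R -> R) : classK a -> classK (fun s => a (B * s)).
Proof.
case=> ca a0 a_gt0 a_incr; split.
- have gAB : ( *%R B) @` [set t | 0 <= t] `<=` [set t | 0 <= t].
    by move=> _ [s /= s0 <-]; exact: scale_ge0.
  exact: (continuous_within_comp (@mulrl_continuous _ B) gAB ca).
- by rewrite mulr0.
- by move=> s s_gt0; apply: a_gt0; exact: mulr_gt0.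
- by move=> s t s0 st; apply: a_incr; rewrite ?scale_ge0 ?ltr_pM2l.
Qed.

Lemma classKL_scale (sg : R -> R -> R) :
  classKL sg -> classKL (fun s t => sg (B * s) t).
Proof.
case=> csg sg_ge0 sgK sg_decr sg_lim; split.
- have cg : continuous (fun p : R * R => (B * p.1, p.2)).
    move=> p; have cB : {for p, continuous (fun q : R * R => B * q.1)}.
      apply: (@continuous_comp _ _ _ fst ( *%R B)); first exact: cvg_fst.
      exact: mulrl_continuous.
    have c2 : {for p, continuous (fun q : R * R => q.2)} by exact: cvg_snd.
    exact: (cvg_pair cB c2).
  have gAB : (fun p : R * R => (B * p.1, p.2)) @` [set p | 0 <= p.1 /\ 0 <= p.2]
      `<=` [set p | 0 <= p.1 /\ 0 <= p.2].
    by move=> _ [p /= [p1 p2] <-]; split; rewrite //= scale_ge0.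
  exact: (continuous_within_comp cg gAB csg).
- by move=> s t s0 t0; rewrite sg_ge0 ?scale_ge0.
- by move=> t t0; exact: classK_scale (sgK t t0).
- by move=> s t1 t2 s0; apply: sg_decr; exact: scale_ge0.
- by move=> s s0; apply: sg_lim; exact: scale_ge0.
Qed.

End ScaleComparison.

Lemma classK_le {R : realType} {a : R -> R} :
  classK a -> forall s t, 0 <= s -> s <= t -> a s <= a t.
Proof.
case=> _ _ _ a_incr s t s0; rewrite le_eqVlt => /orP[/eqP-> //|st].
exact/ltW/a_incr.
Qed.

Lemma nat_multiple_floor {R : realType} {T t : R} : 0 < T -> 0 <= t ->
  exists n : nat, n%:R * T <= t /\ t - n%:R * T <= T.
Proof.
move=> T_gt0 t0; have := truncn_itv (divr_ge0 t0 (ltW T_gt0)).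
move=> /andP[]; rewrite ler_pdivlMr // ltr_pdivrMr // mulrS mulrDl mul1r.
by exists (Num.truncn (t / T)); split; lra.
Qed.

Section PeriodicShift.
Context {R : realType} {UU XX YY : normedModType R} {D : Type}.
Context {S : @ctrl_data R UU XX YY D} {T : R}.
Hypotheses (T_gt0 : 0 < T) (S_sys : is_control_system S)
  (S_per : T_periodic T S).

Lemma output_periodic (n : nat) t x v : 0 <= t -> cs_U S v ->
  cs_H S (t + n%:R * T) x v = cs_H S t x v.
Proof.
case: S_per => H_per _; elim: n t => [|n IHn] t t0 Uv; first by rewrite mul0r addr0.
rewrite mulrSr mulrDl mul1r addrA H_per ?IHn //.
by rewrite addr_ge0 // mulr_ge0 // ltW.
Qed.

Lemma IOS_estimate_shift {sg b g} (n : nat) {u t0 x0 d t} :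
  IOS_estimate S sg b g -> cs_MU S u -> cs_MD S d ->
  n%:R * T <= t0 -> t0 <= t -> cs_A S t t0 x0 u d ->
  ((`|cs_H S t (cs_phi S t t0 x0 u d) (u t)|)%:E <=
    (sg (b (t0 - n%:R * T) * `|x0|) (t - t0))%:E +
    ereal_sup [set (g `|u tau|)%:E | tau in [set tau | (t0 <= tau <= t)%R]])%E.
Proof.
case: S_sys => -[_ MU_M _] _ _ _ _.
case: S_per => _ [PU [PD [PUD Ashift]]] est MUu MDd nTt0 t0t At.
have nT_ge0 : 0 <= n%:R * T by rewrite mulr_ge0 // ltW.
have t0nT_ge0 : 0 <= t0 - n%:R * T by rewrite subr_ge0.
have [MUk MDk PUDk] := PUD u d n%:Z MUu MDd.
have [Ak _ phik] := Ashift t t0 x0 u d n%:Z At t0t t0nT_ge0.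
change ((n%:Z)%:~R) with (n%:R : R) in PUDk, Ak, phik.
have PUk s : 0 <= s -> PU n%:Z u s = u (s + n%:R * T).
  by move=> s0; have [] := PUDk s s0 (addr_ge0 s0 nT_ge0).
have := est _ _ x0 _ _ MUk t0nT_ge0 MDk (lerB t0t (lexx _)) Ak.
have [Uu _] := MU_M u MUu.
have H_shift y : cs_H S (t - n%:R * T) y (u t) = cs_H S t y (u t).
  have t_nT_ge0 : 0 <= t - n%:R * T by lra.
  have t_ge0 : 0 <= t by lra.
  by have := output_periodic n _ y _ t_nT_ge0 (Uu t t_ge0); rewrite subrK.
rewrite -phik PUk ?subrK ?H_shift; last lra.
move=> /le_trans; apply; apply: leeD.
  by rewrite opprB addrA subrK.
apply: ereal_sup_le => _ [tau /andP[tau_ge tau_le] <-].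
exists (tau + n%:R * T); first by apply/andP; split; lra.
by rewrite /= PUk //; lra.
Qed.

Lemma IOS_estimate_uniform {sg b g} (B : R) :
  classKL sg -> IOS_estimate S sg b g ->
  (forall s, 0 <= s <= T -> 0 <= b s <= B) ->
  IOS_estimate S (fun s t => sg (B * s) t) (fun _ => 1) g.
Proof.
case=> _ _ sgK _ _ est b_bound u t0 x0 d t MUu t0_ge0 MDd t0t At.
have [n [nTt0 t0nT]] := nat_multiple_floor T_gt0 t0_ge0.
move: (IOS_estimate_shift n est MUu MDd nTt0 t0t At) => /le_trans; apply.
rewrite mul1r leeD2r // lee_fin.
have /andP[b_ge0 b_le] : 0 <= b (t0 - n%:R * T) <= B by apply: b_bound; lra.
have tt0_ge0 : 0 <= t - t0 by rewrite subr_ge0.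
apply: (classK_le (sgK _ tt0_ge0)); first exact: mulr_ge0.
exact: ler_wpM2r.
Qed.

End PeriodicShift.

Theorem lemma2p19 (R : realType) (UU XX YY : normedModType R) (D : Type)
    (S : @ctrl_data R UU XX YY D) (T : R) :
  0 < T -> is_control_system S -> T_periodic T S -> IOS S -> UIOS S.
Proof.
move=> T_gt0 S_sys S_per [bic rfc req [sg [b [g [sgKL [b_gt0 cb] gN est]]]]].
have [c c0T b_max] : exists2 c, c \in `[0, T] &
    forall t, t \in `[0, T] -> b t <= b c.
  apply: EVT_max; first exact: ltW.
  by apply: continuous_subspaceW cb => t /=; rewrite in_itv /= => /andP[].
have c0 : 0 <= c by move: c0T; rewrite in_itv /= => /andP[].
split => //; exists (fun s t => sg (b c * s) t), g; split => //.
  by apply: classKL_scale => //; exact: b_gt0.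
apply: (IOS_estimate_uniform T_gt0 S_sys S_per (b c) sgKL est) => s sT.
by rewrite ltW ?b_gt0 ?b_max ?in_itv //=; case/andP: sT.
Qed.
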